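(* Consider a multi-sender single-uniprior index-coding instance with binary messages, information-flow graph $\mathcal{G}$ and message graph $\mathcal{U}$, and let $\mathcal{V}_S$ be the vertex set of a degenerated leaf SCC of $\mathcal{G}$, with witnessing sets $\mathcal{V}_{\mathrm{inside}}$ and $\mathcal{V}_{\mathrm{outside}}$. Form $(\mathcal{G}',\mathcal{U}')$ by appending this leaf SCC: pick any $v_{\mathrm{inside}}\in\mathcal{V}_{\mathrm{inside}}$; if $\mathcal{V}_{\mathrm{outside}}$ contains exactly one non-leaf vertex, add an arc from $v_{\mathrm{inside}}$ to that vertex; otherwise (all vertices of $\mathcal{V}_{\mathrm{outside}}$ are leaves) add an arc from $v_{\mathrm{inside}}$ to an arbitrarily chosen vertex of $\mathcal{V}_{\mathrm{outside}}$. The message graph and senders are unchanged ($\mathcal{U}'=\mathcal{U}$). Then \[ N_{\mathrm{SCC}}(\mathcal{G}')\in\{N_{\mathrm{SCC}}(\mathcal{G}),\,N_{\mathrm{SCC}}(\mathcal{G})-1\},\qquad \tilde{\ell}^*(\mathcal{G}',\mathcal{U}')=\tilde{\ell}^*(\mathcal{G},\mathcal{U}),\qquad V_{\mathrm{out}}(\mathcal{G}')=V_{\mathrm{out}}(\mathcal{G}), \] where $N_{\mathrm{SCC}}(\cdot)$ denotes the number of leaf SCCs.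
   Context: Multi-sender single-uniprior index coding with binary messages: there are $n$ receivers and $n$ independent messages $x_1,\dots,x_n$, each a single bit uniformly distributed on $\{0,1\}$. Receiver $i$ knows $x_i$ a priori and requests a set of messages not containing $x_i$. The information-flow graph is the directed graph $\mathcal{G}=(\mathcal{V},\mathcal{A})$ with an arc $(j\to i)$ iff receiver $i$ requests $x_j$. There are $S$ senders; sender $s$ knows a subset $\mathcal{M}_s$ of the messages, and every message is known to some sender. An index code consists of, for each sender $s$, an encoding function mapping the messages in $\mathcal{M}_s$ to $\ell_s$ bits, and for each receiver $i$ a decoding function that, from all senders' outputs together with $x_i$, returns every message requested by $i$, for all message values; its length is $\sum_s \ell_s$. $\tilde{\ell}^*(\mathcal{G},\mathcal{U})$ is the minimum length of an index code for the instance. The message graph $\mathcal{U}$ is the undirected graph on $\mathcal{V}$ with an edge $\{i,j\}$ iff some sender knows both $x_i$ and $x_j$. A leaf vertex of $\mathcal{G}$ has no outgoing arcs; $V_{\mathrm{out}}(\mathcal{G})$ is the number of non-leaf vertices; $j$ is a predecessor of $i$ iff there is a directed path in $\mathcal{G}$ from $j$ to $i$. A leaf SCC is a strongly connected component of $\mathcal{G}$ with at least two vertices and no arc from it to a vertex outside it. For a vertex set $\mathcal{S}$, a vertex $i\notin\mathcal{S}$ is a neighbor of $\mathcal{S}$ iff $\mathcal{U}$ has an edge between $i$ and some vertex of $\mathcal{S}$. A leaf SCC with vertex set $\mathcal{V}_S$ is message-connected iff the subgraph of $\mathcal{U}$ induced by $\mathcal{V}_S$ is connected; message-disconnected iff two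 vertices of $\mathcal{V}_S$ are joined by no path in $\mathcal{U}$; semi-message-connected otherwise. A semi-message-connected leaf SCC is degenerated iff there exist $\mathcal{V}_{\mathrm{inside}}\subsetneq\mathcal{V}_S$ and $\mathcal{V}_{\mathrm{outside}}\subseteq\mathcal{V}\setminus\mathcal{V}_S$ such that: $\mathcal{U}$ has no edge between $\mathcal{V}_{\mathrm{inside}}$ and $\mathcal{V}_S\setminus\mathcal{V}_{\mathrm{inside}}$; $\mathcal{V}_{\mathrm{outside}}$ contains at most one non-leaf vertex of $\mathcal{G}$; and every neighbor of $\mathcal{V}_{\mathrm{inside}}$ is either in $\mathcal{V}_{\mathrm{outside}}$ or a predecessor in $\mathcal{G}$ of some vertex of $\mathcal{V}_{\mathrm{outside}}$. These $\mathcal{V}_{\mathrm{inside}},\mathcal{V}_{\mathrm{outside}}$ are called witnessing sets. *)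

From mathcomp Require Import all_boot.
From mathcomp Require Import boolp.

Set Implicit Arguments.
Unset Strict Implicit.
Unset Printing Implicit Defensive.

Section IndexCoding.
Variables (n S : nat).

(* Information-flow graph: G u v means an arc u -> v, i.e. receiver v requests x_u.
   Senders: M s is the set of messages known to sender s. *)

Definition single_uniprior (G : rel 'I_n) : Prop := forall i, ~~ G i i.

Definition covers (M : 'I_S -> {set 'I_n}) : Prop :=
  forall j : 'I_n, exists s, j \in M s.

(* An index code: sender s maps its messages to len s bits (enc s depends only
   on the messages in M s); receiver i decodes each requested x_j from all
   senders' outputs together with x_i. *)
Definition is_index_code (G : rel 'I_n) (M : 'I_S -> {set 'I_n})
    (len : 'I_S -> nat)
    (enc : 'I_S -> {ffun 'I_n -> bool} -> seq bool)
    (dec : 'I_n -> 'I_n -> ('I_S -> seq bool) -> bool -> bool) : Prop :=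
  [/\ forall s x, size (enc s x) = len s,
      forall s (x y : {ffun 'I_n -> bool}),
        (forall j, j \in M s -> x j = y j) -> enc s x = enc s y
    & forall i j, G j i -> forall x : {ffun 'I_n -> bool},
        dec i j (fun s => enc s x) (x i) = x j].

Definition achievable (G : rel 'I_n) (M : 'I_S -> {set 'I_n}) (L : nat) : Prop :=
  exists len enc dec, is_index_code G M len enc dec /\ \sum_(s < S) len s = L.

(* Minimum length of an index code (0 by convention if no code exists,
   which never happens when every message is known to some sender). *)
Definition ell_star (G : rel 'I_n) (M : 'I_S -> {set 'I_n}) : nat :=
  match pselect (exists L, achievable G M L) with
  | left h =>
      @ex_minn (fun L => `[< achievable G M L >])
        (let: ex_intro L hL := h in ex_intro _ L (asboolT hL))
  | right _ => 0
  end.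

Definition leaf (G : rel 'I_n) (i : 'I_n) : bool := ~~ [exists j, G i j].

Definition V_out (G : rel 'I_n) : nat := #|[set i | ~~ leaf G i]|.

Definition is_SCC (G : rel 'I_n) (C : {set 'I_n}) : bool :=
  [exists v, C == [set u | connect G v u && connect G u v]].

Definition leaf_SCC (G : rel 'I_n) (C : {set 'I_n}) : bool :=
  [&& is_SCC G C, 1 < #|C| &
      [forall u, forall v, ((u \in C) && G u v) ==> (v \in C)]].

Definition N_SCC (G : rel 'I_n) : nat := #|[set C : {set 'I_n} | leaf_SCC G C]|.

Definition msg_edge (M : 'I_S -> {set 'I_n}) : rel 'I_n :=
  fun i j => (i != j) && [exists s, (i \in M s) && (j \in M s)].

Definition msg_edge_in (M : 'I_S -> {set 'I_n}) (C : {set 'I_n}) : rel 'I_n :=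
  fun i j => [&& msg_edge M i j, i \in C & j \in C].

Definition message_connected (M : 'I_S -> {set 'I_n}) (C : {set 'I_n}) : Prop :=
  forall i j, i \in C -> j \in C -> connect (msg_edge_in M C) i j.

Definition message_disconnected (M : 'I_S -> {set 'I_n}) (C : {set 'I_n}) : Prop :=
  exists i j, [/\ i \in C, j \in C & ~~ connect (msg_edge M) i j].

Definition semi_message_connected (M : 'I_S -> {set 'I_n}) (C : {set 'I_n}) : Prop :=
  ~ message_connected M C /\ ~ message_disconnected M C.

Definition neighbor (M : 'I_S -> {set 'I_n}) (A : {set 'I_n}) (i : 'I_n) : bool :=
  (i \notin A) && [exists a in A, msg_edge M i a].

(* j is a predecessor of i: a directed path from j to i (the reflexive
   convention does not change the witnessing condition below). *)
Definition predecessor (G : rel 'I_n) (j i : 'I_n) : bool := connect G j i.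

Definition witnessing_sets (G : rel 'I_n) (M : 'I_S -> {set 'I_n})
    (VS Vin Vout : {set 'I_n}) : Prop :=
  [/\ Vin \proper VS,
      Vout \subset ~: VS,
      forall a b, a \in Vin -> b \in VS :\: Vin -> ~~ msg_edge M a b,
      #|[set u in Vout | ~~ leaf G u]| <= 1
    & forall i, neighbor M Vin i ->
        (i \in Vout) || [exists o in Vout, predecessor G i o]].

Definition degenerated (G : rel 'I_n) (M : 'I_S -> {set 'I_n}) (VS : {set 'I_n}) : Prop :=
  semi_message_connected M VS /\ exists Vin Vout, witnessing_sets G M VS Vin Vout.

Definition add_arc (G : rel 'I_n) (a b : 'I_n) : rel 'I_n :=
  fun u v => G u v || ((u == a) && (v == b)).

End IndexCoding.

From mathcomp Require Import all_boot.
From mathcomp Require Import boolp zify.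

(* The new arc [vin -> w] changes neither the leaf SCCs avoiding [vin] nor the
   leaves, since [vin] already had an outgoing arc; exactly one leaf SCC
   contains [vin] before the change and at most one after.
   For the code length, a code for G stays a code for G' once the messages at
   leaves (which nobody requests) are fixed to 0.  Then receiver w can recover
   x_vin: if two message vectors give the same codewords and agree at w, they
   agree on all of V_outside (leaves are 0, the only non-leaf may be w) and
   hence, by decoding along paths, on every neighbor of V_inside.  Splicing
   them along V_inside therefore keeps the codewords, and decoding along a
   path from vin to a vertex outside V_inside forces them to agree at vin. *)

Set Implicit Arguments.
Unset Strict Implicit.
Unset Printing Implicit Defensive.

Lemma connect_preserves (T : finType) (e : rel T) (P : T -> Prop) :
  (forall x y, P x -> e x y -> P y) -> forall x y, P x -> connect e x y -> P y.
Proof.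
move=> stepP x y Px /connectP [p pth ->].
elim: p x Px pth => //= z p IHp x Px /andP [exz pth].
exact: IHp (stepP _ _ Px exz) pth.
Qed.

Section Graphs.
Variable n : nat.
Implicit Types (G : rel 'I_n) (C : {set 'I_n}).

Definition scc_class G (v : 'I_n) := [set u | connect G v u && connect G u v].

Definition out_closed G C :=
  [forall u, forall v, ((u \in C) && G u v) ==> (v \in C)].

Lemma is_SCCE G C : is_SCC G C = [exists v, C == scc_class G v].
Proof. by []. Qed.

Lemma leaf_SCCE G C : leaf_SCC G C = [&& is_SCC G C, 1 < #|C| & out_closed G C].
Proof. by []. Qed.

Lemma scc_classE G C x : is_SCC G C -> x \in C -> C = scc_class G x.
Proof.
move=> /existsP [v /eqP ->]; rewrite inE => /andP [vx xv].
apply/setP => u; rewrite !inE; apply/idP/idP => /andP [h1 h2].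
  by rewrite (connect_trans xv h1) (connect_trans h2 vx).
by rewrite (connect_trans vx h1) (connect_trans h2 xv).
Qed.

Lemma is_SCC_unique G C1 C2 x :
  is_SCC G C1 -> is_SCC G C2 -> x \in C1 -> x \in C2 -> C1 = C2.
Proof. by move=> s1 s2 x1 x2; rewrite (scc_classE s1 x1) (scc_classE s2 x2). Qed.

Lemma out_closed_connect G C x y :
  out_closed G C -> x \in C -> connect G x y -> y \in C.
Proof.
move=> /forallP clC; apply: (@connect_preserves _ G (fun t => t \in C)) => u v uC Guv.
by move/forallP: (clC u) => /(_ v) /implyP; apply; rewrite uC.
Qed.

Lemma nonleaf_arc G u v : G u v -> ~~ leaf G u.
Proof. by move=> Guv; rewrite negbK; apply/existsP; exists v. Qed.

Lemma nonleaf_connect G u v : u != v -> connect G u v -> ~~ leaf G u.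
Proof.
move=> uv /connectP [[|z p]] /=; first by move=> _ vE; rewrite vE eqxx in uv.
by case/andP => /nonleaf_arc.
Qed.

Section AddArc.
Variables (G : rel 'I_n) (a b : 'I_n).
Local Notation G' := (add_arc G a b).

Lemma connect_add_arc_sub u v : connect G u v -> connect G' u v.
Proof. by apply: connect_sub => x y Gxy; apply: connect1; rewrite /add_arc Gxy. Qed.

Lemma connect_add_arc u v :
  connect G' u v -> connect G u v || connect G u a && connect G b v.
Proof.
apply: (@connect_preserves _ G'
  (fun t => connect G u t || connect G u a && connect G b t)); last by rewrite connect0.
move=> x y /orP [ux | /andP [ua bx]] /orP [Gxy | /andP [/eqP xa /eqP yb]].
- by rewrite (connect_trans ux (connect1 Gxy)).
- by rewrite -xa ux yb connect0 orbT.
- by rewrite ua (connect_trans bx (connect1 Gxy)) orbT.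
- by rewrite ua yb connect0 orbT.
Qed.

Lemma connect_add_arc_avoid u v : ~~ connect G u a -> connect G' u v = connect G u v.
Proof.
move=> /negbTE ua; apply/idP/idP => [/connect_add_arc | /connect_add_arc_sub //].
by rewrite ua orbF.
Qed.

Lemma scc_class_add_arc v : ~~ connect G v a -> scc_class G' v = scc_class G v.
Proof.
move=> va; apply/setP => u; rewrite !inE connect_add_arc_avoid //.
case vu: (connect G v u) => //=; rewrite connect_add_arc_avoid //.
by apply: contra va; apply: connect_trans vu.
Qed.

Lemma out_closed_add_arc C : a \notin C -> out_closed G' C = out_closed G C.
Proof.
move=> aC; apply: eq_forallb => u; apply: eq_forallb => v.
case uC: (u \in C) => //=; have /negbTE ua : u != a by apply: contraNneq aC => <-.
by rewrite /add_arc ua orbF.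
Qed.

Lemma is_SCC_add_arc C :
  a \notin C -> out_closed G C -> is_SCC G' C = is_SCC G C.
Proof.
move=> aC clC; rewrite !is_SCCE; apply: eq_existsb => v; case vC: (v \in C).
  rewrite scc_class_add_arc //; apply: contraNN aC.
  exact: out_closed_connect clC vC.
have notC H : (C == scc_class H v) = false.
  by apply/negbTE/eqP => eC; rewrite eC inE connect0 in vC.
by rewrite !notC.
Qed.

Lemma leaf_SCC_add_arc C : a \notin C -> leaf_SCC G' C = leaf_SCC G C.
Proof.
move=> aC; rewrite !leaf_SCCE out_closed_add_arc //.
by case clC: (out_closed G C); rewrite ?andbF // is_SCC_add_arc.
Qed.

Lemma N_SCC_add_arc VS : leaf_SCC G VS -> a \in VS ->
  N_SCC G' = N_SCC G \/ N_SCC G' = N_SCC G - 1.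
Proof.
move=> lVS aVS; set Ca := [set C : {set 'I_n} | a \in C].
have through_a_le1 H : #|[set C | leaf_SCC H C] :&: Ca| <= 1.
  apply/card_le1_eqP => C1 C2; rewrite !inE.
  move=> /andP [/and3P [s1 _ _] a1] /andP [/and3P [s2 _ _] a2].
  exact: is_SCC_unique s2 s1 a2 a1.
have through_a_G : #|[set C | leaf_SCC G C] :&: Ca| = 1.
  apply/eqP; rewrite eqn_leq through_a_le1; apply/card_gt0P.
  by exists VS; rewrite !inE lVS aVS.
have avoiding_a : [set C | leaf_SCC G' C] :\: Ca = [set C | leaf_SCC G C] :\: Ca.
  apply/setP => C; rewrite !inE; case aC: (a \in C) => //=.
  exact: leaf_SCC_add_arc (negbT aC).
rewrite /N_SCC -(cardsID Ca [set C | leaf_SCC G' C]).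
rewrite -(cardsID Ca [set C | leaf_SCC G C]).
rewrite avoiding_a through_a_G; move: (through_a_le1 G').
by case: #|_ :&: Ca| => [|[|]] // _; [right | left]; lia.
Qed.

Lemma leaf_add_arc i : ~~ leaf G a -> leaf G' i = leaf G i.
Proof.
move=> na; congr negb.
apply/existsP/existsP => [[j /orP [Gij | /andP [/eqP -> _]]] | [j Gij]].
- by exists j.
- by move: na; rewrite negbK => /existsP.
- by exists j; rewrite /add_arc Gij.
Qed.

Lemma V_out_add_arc : ~~ leaf G a -> V_out G' = V_out G.
Proof. by move=> na; apply: eq_card => i; rewrite !inE leaf_add_arc. Qed.

End AddArc.
End Graphs.

Section IndexCodes.
Variables (n S : nat) (M : 'I_S -> {set 'I_n}).
Implicit Types (x y : {ffun 'I_n -> bool}).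

Section Decoding.
Variable enc : 'I_S -> {ffun 'I_n -> bool} -> seq bool.

Definition same_code x y := forall s, enc s x = enc s y.

Definition brute_dec (i j : 'I_n) (cw : 'I_S -> seq bool) (xi : bool) : bool :=
  if [pick y | [forall s, enc s y == cw s] && (y i == xi)] is Some y then y j
  else false.

Lemma brute_dec_correct i j :
  (forall x y, same_code x y -> x i = y i -> x j = y j) ->
  forall x, brute_dec i j (fun s => enc s x) (x i) = x j.
Proof.
move=> unambiguous x; rewrite /brute_dec.
case: pickP => [y /andP [/forallP yx /eqP yi] | none].
  by apply: unambiguous yi => s; apply/eqP.
by move: (none x); rewrite eqxx andbT => /forallP [] s.
Qed.

Hypothesis local : forall s x y, (forall j, j \in M s -> x j = y j) -> enc s x = enc s y.

(* A sender that knows a vertex of [A] knows only [A] and its neighbors. *)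
Lemma same_code_splice (A : {set 'I_n}) x y :
  same_code x y -> (forall j, neighbor M A j -> x j = y j) ->
  same_code [ffun i => if i \in A then x i else y i] y.
Proof.
move=> xy nbr_xy s.
case: (boolP [exists a in A, a \in M s]) => [/existsP [a /andP [aA aM]] | noA].
  rewrite -xy; apply: local => j jM; rewrite ffunE; case: ifP => // jA.
  symmetry; apply: nbr_xy; rewrite /neighbor jA /=; apply/existsP; exists a.
  rewrite aA /msg_edge /=; apply/andP; split; first by apply: contraFneq jA => ->.
  by apply/existsP; exists s; rewrite jM aM.
apply: local => j jM; rewrite ffunE; case: ifP => // jA.
by case/negP: noA; apply/existsP; exists j; rewrite jA jM.
Qed.

End Decoding.

Definition zero_leaves (G : rel 'I_n) x : {ffun 'I_n -> bool} :=
  [ffun i => ~~ leaf G i && x i].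

Section CodeForAddArc.
Variables (G : rel 'I_n) (len : 'I_S -> nat).
Variables (enc : 'I_S -> {ffun 'I_n -> bool} -> seq bool)
  (dec : 'I_n -> 'I_n -> ('I_S -> seq bool) -> bool -> bool).
Hypothesis code : is_index_code G M len enc dec.

Lemma same_code_arc x y i j : G j i -> same_code enc x y -> x i = y i -> x j = y j.
Proof.
case: code => _ _ decodes Gji xy xyi.
rewrite -(decodes _ _ Gji x) -(decodes _ _ Gji y) xyi.
by congr dec; apply: funext.
Qed.

Lemma same_code_connect x y i j :
  connect G j i -> same_code enc x y -> x i = y i -> x j = y j.
Proof.
move=> ji xy; apply: (@connect_preserves _ G (fun t => x t = y t -> x j = y j)) ji => //.
by move=> t u tj Gtu xyu; apply/tj/(same_code_arc Gtu xy).
Qed.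

Variables (Vin Vout : {set 'I_n}) (w : 'I_n).
Hypothesis Vout_nonleaf_le1 : #|[set u in Vout | ~~ leaf G u]| <= 1.
Hypothesis neighbor_reaches_Vout : forall i, neighbor M Vin i ->
  (i \in Vout) || [exists o in Vout, predecessor G i o].
Hypothesis w_Vout : w \in Vout.
Hypothesis w_nonleaf : [exists u in Vout, ~~ leaf G u] -> ~~ leaf G w.

Section Agreement.
Variables x y : {ffun 'I_n -> bool}.
Hypotheses (xy : same_code enc x y) (xy_leaf : forall i, leaf G i -> x i = y i)
  (xy_w : x w = y w).

Lemma agree_on_Vout o : o \in Vout -> x o = y o.
Proof.
move=> oV; case lo: (leaf G o); first exact: xy_leaf.
have lw : ~~ leaf G w by apply: w_nonleaf; apply/existsP; exists o; rewrite oV lo.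
suff -> : o = w by [].
by move/card_le1_eqP: Vout_nonleaf_le1; apply; rewrite !inE ?oV ?lo ?w_Vout ?lw.
Qed.

Lemma agree_on_neighbors j : neighbor M Vin j -> x j = y j.
Proof.
have from_Vout o : o \in Vout -> connect G j o -> x j = y j.
  by move=> oV jo; apply: same_code_connect jo xy (agree_on_Vout oV).
move/neighbor_reaches_Vout => /orP [jV | /existsP [o /andP [oV jo]]].
  exact: from_Vout jV (connect0 _ _).
exact: from_Vout oV jo.
Qed.

Lemma agree_across_Vin vin b :
  vin \in Vin -> b \notin Vin -> connect G vin b -> x vin = y vin.
Proof.
move=> vinV bV vinb; case: code => _ local _.
have spliced := same_code_splice local xy agree_on_neighbors.
by have := same_code_connect vinb spliced; rewrite !ffunE vinV (negbTE bV); apply.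
Qed.

End Agreement.

Variables (vin b : 'I_n).
Hypotheses (vin_Vin : vin \in Vin) (b_Vin : b \notin Vin) (vin_b : connect G vin b).

Let enc' s x := enc s (zero_leaves G x).

Lemma index_code_add_arc :
  is_index_code (add_arc G vin w) M len enc' (brute_dec enc').
Proof.
have vin_nonleaf : ~~ leaf G vin.
  by apply: nonleaf_connect vin_b; apply: contraNneq b_Vin => <-.
case: code => size_enc local _; split=> [s x | s x y xy | i j Gji x].
- exact: size_enc.
- by apply: local => j jM; rewrite !ffunE xy.
apply: brute_dec_correct => {}x y xy xyi.
have zi : zero_leaves G x i = zero_leaves G y i by rewrite !ffunE xyi.
have [j_nonleaf zj] : ~~ leaf G j /\ zero_leaves G x j = zero_leaves G y j.
  case/orP: Gji => [Gji | /andP [/eqP -> /eqP iw]].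
    by split; [apply: nonleaf_arc Gji | apply: same_code_arc Gji xy zi].
  split=> //; rewrite iw in zi; apply: agree_across_Vin vin_Vin b_Vin vin_b => //.
  by move=> k lk; rewrite !ffunE lk.
by move: zj; rewrite !ffunE j_nonleaf.
Qed.

End CodeForAddArc.

Lemma achievable_add_arc_sub (G : rel 'I_n) a b L :
  achievable (add_arc G a b) M L -> achievable G M L.
Proof.
move=> [len [enc [dec [[size_enc local decodes] sumL]]]].
exists len, enc, dec; split=> //; split=> // i j Gji; apply: decodes.
by rewrite /add_arc Gji.
Qed.

Lemma ell_star_ext (G1 G2 : rel 'I_n) :
  (forall L, achievable G1 M L <-> achievable G2 M L) -> ell_star G1 M = ell_star G2 M.
Proof.
move=> same; rewrite /ell_star.
case: pselect => [h1|n1]; case: pselect => [h2|n2] //.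
- by apply: eq_ex_minn => L; apply/asboolP/asboolP => /same.
- by case: n2; case: h1 => L /same; exists L.
- by case: n1; case: h2 => L /same; exists L.
Qed.

End IndexCodes.

Theorem proposition2 (n S : nat) (G : rel 'I_n) (M : 'I_S -> {set 'I_n})
    (VS Vin Vout : {set 'I_n}) (vin w : 'I_n) :
  single_uniprior G ->
  covers M ->
  leaf_SCC G VS ->
  degenerated G M VS ->
  witnessing_sets G M VS Vin Vout ->
  vin \in Vin ->
  w \in Vout ->
  ([exists u in Vout, ~~ leaf G u] -> ~~ leaf G w) ->
  [/\ N_SCC (add_arc G vin w) = N_SCC G \/ N_SCC (add_arc G vin w) = N_SCC G - 1,
      ell_star (add_arc G vin w) M = ell_star G M
    & V_out (add_arc G vin w) = V_out G].
Proof.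
move=> _ _ lVS _ [Vin_VS _ _ Vout_le1 nbr] vinV wV w_nonleaf.
have vinVS : vin \in VS := subsetP (proper_sub Vin_VS) _ vinV.
have [_ [b bVS bV]] := properP Vin_VS.
have vin_b : connect G vin b.
  case/and3P: lVS => sccVS _ _.
  by move: bVS; rewrite (scc_classE sccVS vinVS) inE => /andP [].
have vin_nonleaf : ~~ leaf G vin.
  by apply: nonleaf_connect vin_b; apply: contraNneq bV => <-.
split.
- exact: N_SCC_add_arc lVS vinVS.
- apply: ell_star_ext => L; split; first exact: achievable_add_arc_sub.
  case=> len [enc [dec [code sumL]]]; exists len.
  have code' := index_code_add_arc code Vout_le1 nbr wV w_nonleaf vinV bV vin_b.
  by do 2 eexists; split; first exact: code'.
- exact: V_out_add_arc.
Qed.
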